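(* Let $\mathbb{A}$ be a monoidal category and $\mathbb{X}$ a right $\mathbb{A}$-enriched category. Fix $X\in\mathbb{X}$, $A\in\mathbb{A}$ and an object $X\lhd A\in\mathbb{X}$, and suppose given, for all $B\in\mathbb{A}$ and $Y\in\mathbb{X}$, mutually inverse bijections $(-)^\Downarrow$ from morphisms $f:B\to\mathrm{Hom}(X\lhd A,Y)$ to morphisms $A\otimes B\to\mathrm{Hom}(X,Y)$ and $(-)^\Uparrow$ in the reverse direction. Then the following are equivalent: (i) there exists $\eta:A\to\mathrm{Hom}(X,X\lhd A)$ such that $(f)^\Downarrow=(\eta\otimes f)m$ for all such $f$; (ii) for all morphisms of the appropriate types: (a) $(1\otimes h)(f)^\Downarrow=(hf)^\Downarrow$; (b) $h(g)^\Uparrow=((1\otimes h)g)^\Uparrow$; (c) $((f)^\Downarrow\otimes g)m=a_\otimes((f\otimes g)m)^\Downarrow$; (d) $((f)^\Uparrow\otimes g)m=(a_\otimes(f\otimes g)m)^\Uparrow$. Here in (a) $h:B'\to B$, $f:B\to\mathrm{Hom}(X\lhd A,Y)$; in (b) $h:B'\to B$, $g:A\otimes B\to\mathrm{Hom}(X,Y)$; in (c) $f:B\to\mathrm{Hom}(X\lhd A,Y)$, $g:C\to\mathrm{Hom}(Y,Z)$; in (d) $f:A\otimes B\to\mathrm{Hom}(X,Y)$, $g:C\to\mathrm{Hom}(Y,Z)$; and $a_\otimes:(A\otimes B)\otimes C\to A\otimes(B\otimes C)$ is the associativity isomorphism.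
   Context: Composition is written in diagrammatic order: $fg$ means first $f$ then $g$. $\mathbb{A}$ is monoidal with tensor $\otimes$, unit $I$, associator $a_\otimes$ and unitors $u^L_\otimes:I\otimes A\to A$, $u^R_\otimes:A\otimes I\to A$. A right $\mathbb{A}$-enriched category $\mathbb{X}$ has hom-objects $\mathrm{Hom}(X,Y)\in\mathbb{A}$, composition morphisms $m=m_{XYZ}:\mathrm{Hom}(X,Y)\otimes\mathrm{Hom}(Y,Z)\to\mathrm{Hom}(X,Z)$ and units $id_X:I\to\mathrm{Hom}(X,X)$ satisfying the associativity law $(m\otimes1)m=a_\otimes(1\otimes m)m$ and unit laws $(id\otimes1)m=u^L_\otimes$, $(1\otimes id)m=u^R_\otimes$. *)

(* Composition is written in diagrammatic order: comp f g = "f then g". *)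

Set Implicit Arguments.
Unset Strict Implicit.

Record MonoidalCategory := {
  ob : Type;
  hom : ob -> ob -> Type;
  idm : forall a, hom a a;
  comp : forall a b c, hom a b -> hom b c -> hom a c;
  comp_id_l : forall a b (f : hom a b), comp (idm a) f = f;
  comp_id_r : forall a b (f : hom a b), comp f (idm b) = f;
  comp_assoc : forall a b c d (f : hom a b) (g : hom b c) (h : hom c d),
      comp (comp f g) h = comp f (comp g h);
  tens : ob -> ob -> ob;
  tensm : forall a b c d, hom a b -> hom c d -> hom (tens a c) (tens b d);
  tens_id : forall a b, tensm (idm a) (idm b) = idm (tens a b);
  tens_comp : forall a b c a' b' c' (f : hom a b) (g : hom b c)
      (f' : hom a' b') (g' : hom b' c'),
      tensm (comp f g) (comp f' g') = comp (tensm f f') (tensm g g');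
  unit : ob;
  assoc : forall a b c, hom (tens (tens a b) c) (tens a (tens b c));
  assoc_inv : forall a b c, hom (tens a (tens b c)) (tens (tens a b) c);
  assoc_inv_l : forall a b c, comp (assoc a b c) (assoc_inv a b c) = idm _;
  assoc_inv_r : forall a b c, comp (assoc_inv a b c) (assoc a b c) = idm _;
  assoc_nat : forall a a' b b' c c' (f : hom a a') (g : hom b b') (h : hom c c'),
      comp (tensm (tensm f g) h) (assoc a' b' c')
      = comp (assoc a b c) (tensm f (tensm g h));
  lunit : forall a, hom (tens unit a) a;
  lunit_inv : forall a, hom a (tens unit a);
  lunit_inv_l : forall a, comp (lunit a) (lunit_inv a) = idm _;
  lunit_inv_r : forall a, comp (lunit_inv a) (lunit a) = idm _;
  lunit_nat : forall a b (f : hom a b),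
      comp (tensm (idm unit) f) (lunit b) = comp (lunit a) f;
  runit : forall a, hom (tens a unit) a;
  runit_inv : forall a, hom a (tens a unit);
  runit_inv_l : forall a, comp (runit a) (runit_inv a) = idm _;
  runit_inv_r : forall a, comp (runit_inv a) (runit a) = idm _;
  runit_nat : forall a b (f : hom a b),
      comp (tensm f (idm unit)) (runit b) = comp (runit a) f;
  pentagon : forall a b c d,
      comp (comp (tensm (assoc a b c) (idm d)) (assoc a (tens b c) d))
           (tensm (idm a) (assoc b c d))
      = comp (assoc (tens a b) c d) (assoc a b (tens c d));
  triangle : forall a b,
      comp (assoc a unit b) (tensm (idm a) (lunit b))
      = tensm (runit a) (idm b)
}.

Arguments hom {m}.
Arguments idm {m}.
Arguments comp {m a b c}.
Arguments tens {m}.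
Arguments tensm {m a b c d}.
Arguments unit {m}.
Arguments assoc {m}.
Arguments assoc_inv {m}.
Arguments lunit {m}.
Arguments runit {m}.

Record RightEnriched (V : MonoidalCategory) := {
  eob : Type;
  ehom : eob -> eob -> ob V;
  emul : forall x y z, hom (tens (ehom x y) (ehom y z)) (ehom x z);
  eid : forall x, hom unit (ehom x x);
  emul_assoc : forall x y z w,
      comp (tensm (emul x y z) (idm (ehom z w))) (emul x z w)
      = comp (assoc (ehom x y) (ehom y z) (ehom z w))
             (comp (tensm (idm (ehom x y)) (emul y z w)) (emul x y w));
  emul_unit_l : forall x y,
      comp (tensm (eid x) (idm (ehom x y))) (emul x x y) = lunit (ehom x y);
  emul_unit_r : forall x y,
      comp (tensm (idm (ehom x y)) (eid y)) (emul x y y) = runit (ehom x y)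
}.

Arguments eob {V}.
Arguments ehom {V r}.
Arguments emul {V r}.
Arguments eid {V r}.

(* Given η, (a) is functoriality of ⊗ and (c) is associativity of m.
   Conversely, put η := ρ⁻¹ (id_{X◁A})^⇓.  Then (η ⊗ f) m = (ρ⁻¹ ⊗ 1) a ((id ⊗ f) m)^⇓
   by (c); the unit law turns (id ⊗ f) m into λ f, (a) pulls λ out as 1 ⊗ λ, and
   the triangle identity cancels (ρ⁻¹ ⊗ 1) a (1 ⊗ λ), leaving f^⇓.  In both
   directions (b) and (d) are (a) and (c) transported along the bijection. *)

From Stdlib Require Import Setoid.

Lemma tensm_idm_comp (V : MonoidalCategory) (a b c d : ob V)
    (f : hom a b) (g : hom c d) :
  tensm f g = comp (tensm (idm a) g) (tensm f (idm d)).
Proof. rewrite <- tens_comp, comp_id_r, comp_id_l. reflexivity. Qed.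

Lemma comp_tensm_idm_l (V : MonoidalCategory) (a b c d e : ob V)
    (h : hom a b) (g : hom c d) (f : hom b e) :
  comp (tensm (idm c) h) (tensm g f) = tensm g (comp h f).
Proof. rewrite <- tens_comp, comp_id_l. reflexivity. Qed.

Lemma emul_eid_l (V : MonoidalCategory) (E : RightEnriched V)
    (x y : eob E) (B : ob V) (f : hom B (ehom x y)) :
  comp (tensm (eid x) f) (emul x x y) = comp (lunit B) f.
Proof. rewrite tensm_idm_comp, comp_assoc, emul_unit_l, lunit_nat. reflexivity. Qed.

Section Transpose.

Context {V : MonoidalCategory} {E : RightEnriched V}.
Context {X : eob E} {A : ob V} {XA : eob E}.
Context {down : forall (B : ob V) (Y : eob E),
  hom B (ehom XA Y) -> hom (tens A B) (ehom X Y)}.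
Context {up : forall (B : ob V) (Y : eob E),
  hom (tens A B) (ehom X Y) -> hom B (ehom XA Y)}.
Hypothesis up_down : forall B Y (f : hom B (ehom XA Y)), up B Y (down B Y f) = f.
Hypothesis down_up : forall B Y (g : hom (tens A B) (ehom X Y)), down B Y (up B Y g) = g.

Definition down_represented_by (eta : hom A (ehom X XA)) : Prop :=
  forall (B : ob V) (Y : eob E) (f : hom B (ehom XA Y)),
    down B Y f = comp (tensm eta f) (emul X XA Y).

Definition down_natural : Prop :=
  forall (B B' : ob V) (Y : eob E) (h : hom B' B) (f : hom B (ehom XA Y)),
    comp (tensm (idm A) h) (down B Y f) = down B' Y (comp h f).

Definition up_natural : Prop :=
  forall (B B' : ob V) (Y : eob E) (h : hom B' B) (g : hom (tens A B) (ehom X Y)),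
    comp h (up B Y g) = up B' Y (comp (tensm (idm A) h) g).

Definition down_emul : Prop :=
  forall (B C : ob V) (Y Z : eob E) (f : hom B (ehom XA Y)) (g : hom C (ehom Y Z)),
    comp (tensm (down B Y f) g) (emul X Y Z)
    = comp (assoc A B C) (down (tens B C) Z (comp (tensm f g) (emul XA Y Z))).

Definition up_emul : Prop :=
  forall (B C : ob V) (Y Z : eob E) (f : hom (tens A B) (ehom X Y)) (g : hom C (ehom Y Z)),
    comp (tensm (up B Y f) g) (emul XA Y Z)
    = up (tens B C) Z (comp (assoc_inv A B C) (comp (tensm f g) (emul X Y Z))).

Lemma up_natural_of_down : down_natural -> up_natural.
Proof.
  intros down_nat B B' Y h g.
  rewrite <- (down_up B Y g) at 2. rewrite down_nat, up_down. reflexivity.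
Qed.

Lemma up_emul_of_down : down_emul -> up_emul.
Proof.
  intros down_mul B C Y Z f g.
  pose proof (down_mul B C Y Z (up B Y f) g) as H. rewrite down_up in H.
  rewrite H, <- comp_assoc, assoc_inv_r, comp_id_l, up_down. reflexivity.
Qed.

Section Represented.

Context {eta : hom A (ehom X XA)}.
Hypothesis down_eta : down_represented_by eta.

Lemma down_natural_of_represented : down_natural.
Proof.
  intros B B' Y h f.
  rewrite !down_eta, <- comp_assoc, comp_tensm_idm_l. reflexivity.
Qed.

Lemma down_emul_of_represented : down_emul.
Proof.
  intros B C Y Z f g. rewrite !down_eta.
  rewrite <- (comp_id_r g) at 1.
  rewrite tens_comp, comp_assoc, emul_assoc, <- comp_assoc, assoc_nat, !comp_assoc.
  f_equal.
  rewrite <- comp_assoc, <- tens_comp, comp_id_r. reflexivity.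
Qed.

End Represented.

Definition transpose_unit : hom A (ehom X XA) :=
  comp (runit_inv A) (down unit XA (eid XA)).

Lemma down_represented_by_transpose_unit :
  down_natural -> down_emul -> down_represented_by transpose_unit.
Proof.
  intros down_nat down_mul B Y f. unfold transpose_unit.
  rewrite <- (comp_id_l f) at 2.
  rewrite tens_comp, comp_assoc, down_mul, emul_eid_l, <- down_nat.
  rewrite <- (comp_assoc (assoc A unit B)), triangle, <- comp_assoc, <- tens_comp,
    runit_inv_r, comp_id_l, tens_id, comp_id_l.
  reflexivity.
Qed.

End Transpose.

Theorem mainTheorem4 (V : MonoidalCategory) (E : RightEnriched V)
  (X : eob E) (A : ob V) (XA : eob E)
  (down : forall (B : ob V) (Y : eob E),
            hom B (ehom XA Y) -> hom (tens A B) (ehom X Y))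
  (up : forall (B : ob V) (Y : eob E),
            hom (tens A B) (ehom X Y) -> hom B (ehom XA Y))
  (up_down : forall B Y (f : hom B (ehom XA Y)), up B Y (down B Y f) = f)
  (down_up : forall B Y (g : hom (tens A B) (ehom X Y)), down B Y (up B Y g) = g) :
  (exists eta : hom A (ehom X XA),
     forall (B : ob V) (Y : eob E) (f : hom B (ehom XA Y)),
       down B Y f = comp (tensm eta f) (emul X XA Y))
  <->
  ((forall (B B' : ob V) (Y : eob E) (h : hom B' B) (f : hom B (ehom XA Y)),
       comp (tensm (idm A) h) (down B Y f) = down B' Y (comp h f)) /\
   (forall (B B' : ob V) (Y : eob E) (h : hom B' B) (g : hom (tens A B) (ehom X Y)),
       comp h (up B Y g) = up B' Y (comp (tensm (idm A) h) g)) /\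
   (forall (B C : ob V) (Y Z : eob E) (f : hom B (ehom XA Y)) (g : hom C (ehom Y Z)),
       comp (tensm (down B Y f) g) (emul X Y Z)
       = comp (assoc A B C) (down (tens B C) Z (comp (tensm f g) (emul XA Y Z)))) /\
   (forall (B C : ob V) (Y Z : eob E) (f : hom (tens A B) (ehom X Y)) (g : hom C (ehom Y Z)),
       comp (tensm (up B Y f) g) (emul XA Y Z)
       = up (tens B C) Z (comp (assoc_inv A B C) (comp (tensm f g) (emul X Y Z))))).
Proof.
  split.
  - intros [eta down_eta].
    pose proof (down_natural_of_represented down_eta) as down_nat.
    pose proof (down_emul_of_represented down_eta) as down_mul.
    split; [exact down_nat |].
    split; [exact (up_natural_of_down up_down down_up down_nat) |].
    split; [exact down_mul |].
    exact (up_emul_of_down up_down down_up down_mul).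
  - intros [down_nat [_ [down_mul _]]].
    exists (transpose_unit (down := down)).
    exact (down_represented_by_transpose_unit down_nat down_mul).
Qed.
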